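(* Let $T$ be a locally finite triangulation of the $\infty$-gon (so $T$ consists of finite arcs only), and let $\mathcal{T}$ be the subcategory of $\mathcal{C}_2$ whose indecomposable objects correspond to the arcs of $T$ (a maximal rigid subcategory of $\mathcal{C}_2$). Then $\mathcal{T}$ is not precovering in $\mathcal{C}_2$, and hence not functorially finite.
   Context: Let $R=\mathbb{C}[x,y]/(x^2)$, graded with $\deg x=1$, $\deg y=-1$; $M(j)_n=M_{j+n}$. $\mathcal{C}_2$ is the Frobenius category of finitely generated $\mathbb{Z}$-graded maximal Cohen–Macaulay $R$-modules with degree-preserving morphisms. Arcs $(a,b)$, $a\in\mathbb{Z}\cup\{-\infty\}$, $b\in\mathbb{Z}$, $a<b$, correspond to indecomposables via $(x,y^k)(j)\leftrightarrow(-j-k,1-j)$ ($k\ge0$, $(x,y^0)=R$) and $\mathbb{C}[y](j)=(R/(x))(j)\leftrightarrow(-\infty,-j)$; arcs of the $\infty$-gon are those with $a\in\mathbb{Z}$. Arcs $(a,b),(c,d)$ cross if $a<c<b<d$ or $c<a<d<b$; a triangulation of the $\infty$-gon is a maximal set of pairwise non-crossing arcs with integer endpoints; it is locally finite if each integer is an endpoint of only finitely many of its arcs. Subcategories are full, additive, closed under isomorphisms and summands. $\mathcal{T}$ is precovering if every object $M$ of $\mathcal{C}_2$ admits a right $\mathcal{T}$-approximation, i.e. a morphism $T\to M$ with $T\in\mathcal{T}$ through which every morphism $T'\to M$ with $T'\in\mathcal{T}$ factors. *)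

From mathcomp Require Import all_boot all_algebra.
From mathcomp Require Import complex.
From mathcomp Require Import reals Rstruct.

Set Implicit Arguments.
Unset Strict Implicit.
Unset Printing Implicit Defensive.
Import GRing.Theory Num.Theory.
Local Open Scope ring_scope.

Definition CC : fieldType := complex Rdefinitions.R.

(** * The ring R = C[x,y]/(x^2), deg x = 1, deg y = -1.
    R has C-basis the monomials x^e y^m (e in {0,1}, m in N),
    encoded as (e, m) : bool * nat, of degree e - m. *)
Definition mono := (bool * nat)%type.
Definition mono_deg (u : mono) : int := (u.1 : nat)%:Z - (u.2)%:Z.
(** multiplication of monomials by x and by y in R (None = 0 since x^2 = 0) *)
Definition xmul (u : mono) : option mono := if u.1 then None else Some (true, u.2).
Definition ymul (u : mono) : option mono := Some (u.1, u.2.+1).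
Definition cands (d : int) : seq mono :=
  (if d <= 0 then [:: (false, `|d|%N)] else [::]) ++
  (if d <= 1 then [:: (true, `|1 - d|%N)] else [::]).

(** * Arcs: (a, b) with a in Z u {-oo} (None = -oo), b in Z. *)
Definition arc := (option int * int)%type.
Definition valid_arc (A : arc) : Prop :=
  match A.1 with Some a => a < A.2 | None => True end.

(** The indecomposable object of C_2 attached to an arc:
    (a,b) finite  <->  (x, y^k)(j) with j = 1 - b, k = b - 1 - a;
    (-oo, b)      <->  C[y](j) = (R/(x))(j) with j = -b.
    Each such module is a monomial sub-quotient of R(j): its C-basis
    consists of the monomials u with arc_mon A u, the module structure being
    induced from R (a product landing outside the basis is 0, which is
    correct both for the ideal (x,y^k) and for the quotient R/(x)). *)
Definition arc_shift (A : arc) : int :=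
  match A.1 with Some _ => 1 - A.2 | None => - A.2 end.
Definition arc_mon (A : arc) (u : mono) : bool :=
  match A.1 with
  | Some a => u.1 || (`|(A.2 - 1 - a)%R|%N <= u.2)%N   (* ideal (x, y^k) *)
  | None => ~~ u.1                                (* R/(x) = C[y] *)
  end.
(** basis of the degree-n piece M(j)_n = M_{j+n} *)
Definition arc_basis (A : arc) (n : int) : seq mono :=
  filter (arc_mon A) (cands (arc_shift A + n)).
Definition adim (A : arc) (n : int) : nat := size (arc_basis A n).

Definition mono0 : mono := (false, 0%N).

(** Action of x (degree n -> n+1) and y (degree n+1 -> n), as matrices
    acting on row vectors of coordinates. *)
Definition xmat (A : arc) (n : int) : 'M[CC]_(adim A n, adim A (n + 1)) :=
  \matrix_(i, i') ((xmul (nth mono0 (arc_basis A n) i)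
                     == Some (nth mono0 (arc_basis A (n + 1)) i')) %:R).
Definition ymat (A : arc) (n : int) : 'M[CC]_(adim A (n + 1), adim A n) :=
  \matrix_(i, i') ((ymul (nth mono0 (arc_basis A (n + 1)) i)
                     == Some (nth mono0 (arc_basis A n) i')) %:R).

Definition is_ghom (A B : arc) (F : forall n : int, 'M[CC]_(adim A n, adim B n))
  : Prop :=
  forall n : int,
    xmat A n *m F (n + 1) = F n *m xmat B n /\
    ymat A n *m F n = F (n + 1) *m ymat B n.

(** * The category C_2 (Krull-Schmidt: objects are finite direct sums of
    indecomposables, encoded as lists of arcs; morphisms between direct sums
    are matrices of morphisms between the summands). *)
Definition arc0 : arc := (None, 0).
Definition obj := seq arc.
Definition valid_obj (s : obj) : Prop := forall A, A \in s -> valid_arc A.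

Definition mor (s t : obj) : Type :=
  forall (i : 'I_(size s)) (j : 'I_(size t)) (n : int),
    'M[CC]_(adim (nth arc0 s i) n, adim (nth arc0 t j) n).

Definition is_mor (s t : obj) (f : mor s t) : Prop :=
  forall i j, is_ghom (f i j).

Definition comp (s t u : obj) (f : mor s t) (g : mor t u) : mor s u :=
  fun i k n => \sum_(j < size t) (f i j n *m g j k n).

Definition mor_eq (s t : obj) (f g : mor s t) : Prop :=
  forall i j n, f i j n = g i j n.

(** A subcategory, given by the set of arcs of its indecomposables
    (it consists of all finite direct sums of those). *)
Definition in_subcat (P : arc -> Prop) (s : obj) : Prop :=
  forall A, A \in s -> P A.

Definition right_approx (P : arc -> Prop) (M : obj) (X : obj) (f : mor X M) :=
  in_subcat P X /\ is_mor f /\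
  forall (Y : obj) (g : mor Y M), in_subcat P Y -> is_mor g ->
    exists h : mor Y X, is_mor h /\ mor_eq (comp h f) g.

Definition left_approx (P : arc -> Prop) (M : obj) (X : obj) (f : mor M X) :=
  in_subcat P X /\ is_mor f /\
  forall (Y : obj) (g : mor M Y), in_subcat P Y -> is_mor g ->
    exists h : mor X Y, is_mor h /\ mor_eq (comp f h) g.

Definition precovering (P : arc -> Prop) : Prop :=
  forall M : obj, valid_obj M -> exists (X : obj) (f : mor X M), right_approx P f.
Definition preenveloping (P : arc -> Prop) : Prop :=
  forall M : obj, valid_obj M -> exists (X : obj) (f : mor M X), left_approx P f.
Definition functorially_finite (P : arc -> Prop) : Prop :=
  precovering P /\ preenveloping P.

Definition crosses (a b c d : int) : Prop :=
  (a < c /\ c < b /\ b < d) \/ (c < a /\ a < d /\ d < b).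

Definition triangulation (T : int -> int -> Prop) : Prop :=
  (forall a b, T a b -> a < b) /\
  (forall a b c d, T a b -> T c d -> ~ crosses a b c d) /\
  (forall a b, a < b -> ~ T a b -> exists c d, T c d /\ crosses a b c d).

Definition locally_finite (T : int -> int -> Prop) : Prop :=
  forall n : int, exists l : seq (int * int),
    forall a b, T a b -> (a = n \/ b = n) -> (a, b) \in l.

Definition arcs_of (T : int -> int -> Prop) (A : arc) : Prop :=
  match A.1 with Some a => T a A.2 | None => False end.

(* Let M = C[y], the module of the arc (-oo, 0), and suppose f : X -> M were a
   right approximation by arcs of T; let D bound the right endpoints of the
   arcs of X.  Local finiteness forces T to contain an arc (a, b) with a <= 0
   and b > D.  The map (x, y^k)(j) -> C[y] that kills x is a nonzero morphism
   from (a, b) to M, but every composite (a, b) -> (c, d) -> M with d < b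
   vanishes: the first map kills x, which lives in degree b where (c, d) is
   zero, hence the whole x-part of (a, b), so it lands in the kernel of x on
   (c, d), which is the x-part of (c, d); the second map kills that x-part,
   because x acts on C[y] by zero and y acts injectively.
   Hence the map cannot factor through f. *)

From Pilot Require Import Defs.
From mathcomp Require Import all_boot all_order all_algebra zify.
From Stdlib Require Import Classical.
Set Implicit Arguments.
Unset Strict Implicit.
Unset Printing Implicit Defensive.
Import Order.TTheory GRing.Theory Num.Theory.
Local Open Scope ring_scope.

Local Notation mon A n i := (nth mono0 (arc_basis A n) i).

Lemma mem_cands d u : (u \in cands d) = (mono_deg u == d).
Proof.
case: u => [[] m]; rewrite /cands /mono_deg mem_cat /=;
  case: ifP => h1; case: ifP => h2; rewrite ?inE ?in_nil ?xpair_eqE /=; lia.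
Qed.

Lemma mem_arc_basis A n u :
  (u \in arc_basis A n) = (mono_deg u == arc_shift A + n) && arc_mon A u.
Proof. by rewrite mem_filter andbC mem_cands. Qed.

Lemma uniq_arc_basis A n : uniq (arc_basis A n).
Proof. by apply: filter_uniq; rewrite /cands; case: ifP => _; case: ifP => _. Qed.

Lemma nth_arc_basis_eq A n (i j : 'I_(adim A n)) : (mon A n i == mon A n j) = (i == j).
Proof. exact: (nth_uniq mono0 (ltn_ord i) (ltn_ord j) (uniq_arc_basis A n)). Qed.

Lemma nth_arc_basis_inj A n (i j : 'I_(adim A n)) : mon A n i = mon A n j -> i = j.
Proof. by move/eqP; rewrite nth_arc_basis_eq => /eqP. Qed.

Lemma mem_mon A n (i : 'I_(adim A n)) : mon A n i \in arc_basis A n.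
Proof. exact: mem_nth. Qed.

Lemma arc_basis_index A n u :
  u \in arc_basis A n -> exists i : 'I_(adim A n), mon A n i = u.
Proof.
move=> uA; have iA : (index u (arc_basis A n) < adim A n)%N by rewrite index_mem.
by exists (Ordinal iA); rewrite /= nth_index.
Qed.

Lemma arc_basis_ymul A n u :
  u \in arc_basis A (n + 1) -> (u.1, u.2.+1) \in arc_basis A n.
Proof.
case: A => [[c|] d]; case: u => [[] m];
  rewrite !mem_arc_basis /mono_deg /arc_shift /arc_mon /= ?orbT ?andbT; lia.
Qed.

Lemma mem_arc_basis_xy c d n m :
  ((true, m) \in arc_basis (Some c, d) n) = (n == d - m%:Z).
Proof. rewrite mem_arc_basis /mono_deg /arc_shift /arc_mon /= andbT; lia. Qed.

Lemma mem_arc_basis_y c d n m :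
  ((false, m) \in arc_basis (Some c, d) n) =
  (n == d - 1 - m%:Z) && (`|(d - 1 - c)%R| <= m)%N.
Proof. rewrite mem_arc_basis /mono_deg /arc_shift /arc_mon /=; lia. Qed.

Lemma mem_arc_basis_inf p n (b : bool) m :
  ((b, m) \in arc_basis (None, p) n) = ~~ b && (n == p - m%:Z).
Proof. rewrite mem_arc_basis /mono_deg /arc_shift /arc_mon /=; case: b; lia. Qed.

Lemma arc_basis_xmul c d n m :
  (false, m) \in arc_basis (Some c, d) n -> (true, m) \in arc_basis (Some c, d) (n + 1).
Proof. rewrite mem_arc_basis_y mem_arc_basis_xy; lia. Qed.

Lemma adim_fin_eq0 c d n : d < n -> adim (Some c, d) n = 0%N.
Proof.
rewrite /adim; case E: arc_basis => [|u s] // dn.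
have := mem_head u s; rewrite -E mem_arc_basis /mono_deg /arc_shift /=; lia.
Qed.

Lemma adim_inf_ord_eq p n (j l : 'I_(adim (None, p) n)) : j = l.
Proof.
apply: nth_arc_basis_inj; move: (mem_mon j) (mem_mon l).
case: (mon (None, p) n j) => [[] m]; case: (mon (None, p) n l) => [[] m'];
  rewrite !mem_arc_basis_inf //= => /eqP e /eqP e'; congr (_, _); lia.
Qed.

Lemma xmul_eq u v w : xmul v = Some w -> (xmul u == Some w) = (u == v).
Proof. by case: u v => [[] m] [[] m'] //= [<-]; rewrite !xpair_eqE. Qed.

Lemma ymul_eq u v : (ymul u == ymul v) = (u == v).
Proof. by case: u v => [b m] [b' m']; rewrite /ymul /= !xpair_eqE. Qed.

Lemma row_xmat A n (i : 'I_(adim A n)) (i' : 'I_(adim A (n + 1))) :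
  xmul (mon A n i) = Some (mon A (n + 1) i') -> row i (xmat A n) = delta_mx 0 i'.
Proof.
by move=> e; apply/rowP => j; rewrite !mxE e (inj_eq Some_inj) nth_arc_basis_eq eq_sym.
Qed.

Lemma row_xmat_x A n (i : 'I_(adim A n)) : (mon A n i).1 -> row i (xmat A n) = 0.
Proof. by move=> xi; apply/rowP => j; rewrite !mxE /xmul xi. Qed.

Lemma col_xmat A n (i : 'I_(adim A n)) (i' : 'I_(adim A (n + 1))) :
  xmul (mon A n i) = Some (mon A (n + 1) i') -> col i' (xmat A n) = delta_mx i 0.
Proof. by move=> e; apply/colP => k; rewrite !mxE (xmul_eq _ e) nth_arc_basis_eq andbT. Qed.

Lemma row_ymat A n (i' : 'I_(adim A (n + 1))) (i : 'I_(adim A n)) :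
  ymul (mon A (n + 1) i') = Some (mon A n i) -> row i' (ymat A n) = delta_mx 0 i.
Proof.
by move=> e; apply/rowP => j; rewrite !mxE e (inj_eq Some_inj) nth_arc_basis_eq eq_sym.
Qed.

Lemma col_ymat A n (i' : 'I_(adim A (n + 1))) (i : 'I_(adim A n)) :
  ymul (mon A (n + 1) i') = Some (mon A n i) -> col i (ymat A n) = delta_mx i' 0.
Proof. by move=> e; apply/colP => k; rewrite !mxE -e ymul_eq nth_arc_basis_eq andbT. Qed.

Lemma xmat_inf p n : xmat (None, p) n = 0.
Proof.
apply/matrixP => i j; rewrite !mxE; move: (mem_mon i) (mem_mon j).
case: (mon (None, p) n i) => [[] m]; case: (mon (None, p) (n + 1) j) => [[] m'];
  by rewrite !mem_arc_basis_inf.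
Qed.

Lemma ymat_inj A n (v : 'rV[CC]_(adim A (n + 1))) : v *m ymat A n = 0 -> v = 0.
Proof.
move=> v0; apply/rowP => i.
have [j ej] := arc_basis_index (arc_basis_ymul (mem_mon i)).
have yij : ymul (mon A (n + 1) i) = Some (mon A n j) by rewrite ej.
move/(congr1 (col j)): v0; rewrite colE -mulmxA -colE (col_ymat yij) -colE col0.
by move/colP/(_ 0); rewrite !mxE.
Qed.

Lemma int_shift1 (P : int -> Prop) : (forall n, P (n + 1)) -> forall n, P n.
Proof. by move=> h n; rewrite -(subrK 1 n). Qed.

Lemma nat_down_ind (P : nat -> Prop) k :
  (forall m, (k <= m)%N -> P m) -> (forall m, P m.+1 -> P m) -> forall m, P m.
Proof.
move=> base step m; suff: forall t m, (k <= t + m)%N -> P m by apply; apply: leq_addr.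
elim=> [|t IH] {}m; first exact: base.
by case: (leqP k m) => [/base //|_]; rewrite addSnnS => /IH; apply: step.
Qed.

(* Downward induction on m: for m >= k the monomial x y^m is x times y^m, and
   x acts by zero on C[y]; below k use y (x y^m) = x y^(m+1) and the
   injectivity of y on C[y]. *)
Lemma ghom_to_inf_xrow c d p
    (F : forall n, 'M[CC]_(adim (Some c, d) n, adim (None, p) n)) :
  is_ghom F ->
  forall n (k : 'I_(adim (Some c, d) n)), (mon (Some c, d) n k).1 -> row k (F n) = 0.
Proof.
move=> gF; suff xrow0 m n (k : 'I_(adim (Some c, d) n)) :
    mon (Some c, d) n k = (true, m) -> row k (F n) = 0.
  by move=> n k; case E: (mon (Some c, d) n k) => [[] m] // _; apply: xrow0 E.
move: m n k; apply: (nat_down_ind (k := `|(d - 1 - c)%R|%N)) => [m km | m IH];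
  apply: int_shift1 => n k ek.
- have /arc_basis_index[k0 ek0] : (false, m) \in arc_basis (Some c, d) n.
    by move: (mem_mon k); rewrite ek mem_arc_basis_xy mem_arc_basis_y km; lia.
  have xk : xmul (mon (Some c, d) n k0) = Some (mon (Some c, d) (n + 1) k).
    by rewrite ek0 ek.
  by rewrite rowE -(row_xmat xk) -row_mul (gF n).1 xmat_inf mulmx0 row0.
- have /arc_basis_index[k1 ek1] : (true, m.+1) \in arc_basis (Some c, d) n.
    by move: (mem_mon k); rewrite ek !mem_arc_basis_xy; lia.
  have yk : ymul (mon (Some c, d) (n + 1) k) = Some (mon (Some c, d) n k1).
    by rewrite ek ek1.
  apply: (@ymat_inj (None, p) n).
  by rewrite -row_mul -(gF n).2 row_mul (row_ymat yk) -rowE (IH _ _ ek1).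
Qed.

Section LowerArc.

Variables (a b c d : int).
Variable H : forall n, 'M[CC]_(adim (Some a, b) n, adim (Some c, d) n).
Hypotheses (db : d < b) (gH : is_ghom H).

(* Induction on m: x y^m = y^m x, and x sits in degree b, where (c, d) vanishes. *)
Lemma ghom_lower_xrow n (i : 'I_(adim (Some a, b) n)) :
  (mon (Some a, b) n i).1 -> row i (H n) = 0.
Proof.
suff xrow0 m n' (i' : 'I_(adim (Some a, b) n')) :
    mon (Some a, b) n' i' = (true, m) -> row i' (H n') = 0.
  by case E: (mon (Some a, b) n i) => [[] m] // _; apply: xrow0 E.
elim: m n' i' => [|m IH] n' i' ei.
- have nb : n' = b by move: (mem_mon i'); rewrite ei mem_arc_basis_xy; lia.
  by apply/rowP => -[j lt_j]; exfalso; move: lt_j; rewrite adim_fin_eq0 // nb.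
- have /arc_basis_index[i1 ei1] : (true, m) \in arc_basis (Some a, b) (n' + 1).
    by move: (mem_mon i'); rewrite ei !mem_arc_basis_xy; lia.
  have yi : ymul (mon (Some a, b) (n' + 1) i1) = Some (mon (Some a, b) n' i').
    by rewrite ei ei1.
  by rewrite rowE -(row_ymat yi) -row_mul (gH n').2 row_mul (IH _ _ ei1) mul0mx.
Qed.

Lemma ghom_lower_mul_xmat n : H n *m xmat (Some c, d) n = 0.
Proof.
rewrite -(gH n).1; apply/row_matrixP => i; rewrite row_mul row0.
case E: (mon (Some a, b) n i) => [[] m]; first by rewrite row_xmat_x ?E ?mul0mx.
have /arc_basis_index[i1 ei1] : (true, m) \in arc_basis (Some a, b) (n + 1).
  by apply: arc_basis_xmul; rewrite -E mem_mon.
have xi : xmul (mon (Some a, b) n i) = Some (mon (Some a, b) (n + 1) i1).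
  by rewrite E ei1.
by rewrite (row_xmat xi) -rowE ghom_lower_xrow ?ei1.
Qed.

Lemma ghom_lower_ycol n (k : 'I_(adim (Some c, d) n)) :
  ~~ (mon (Some c, d) n k).1 -> col k (H n) = 0.
Proof.
case E: (mon (Some c, d) n k) => [[] m] // _.
have /arc_basis_index[k1 ek1] : (true, m) \in arc_basis (Some c, d) (n + 1).
  by apply: arc_basis_xmul; rewrite -E mem_mon.
have xk : xmul (mon (Some c, d) n k) = Some (mon (Some c, d) (n + 1) k1).
  by rewrite E ek1.
by rewrite colE -(col_xmat xk) colE mulmxA ghom_lower_mul_xmat mul0mx.
Qed.

End LowerArc.

Lemma ghom_lower_comp_inf a b c d p
    (H : forall n, 'M[CC]_(adim (Some a, b) n, adim (Some c, d) n))
    (F : forall n, 'M[CC]_(adim (Some c, d) n, adim (None, p) n)) :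
  d < b -> is_ghom H -> is_ghom F -> forall n, H n *m F n = 0.
Proof.
move=> db gH gF n; apply/matrixP => i j; rewrite !mxE; apply: big1 => k _.
case xk: (mon (Some c, d) n k).1.
- by have /rowP/(_ j) := ghom_to_inf_xrow gF xk; rewrite !mxE => ->; rewrite mulr0.
- by have /colP/(_ i) := ghom_lower_ycol db gH (negbT xk); rewrite !mxE => ->; rewrite mul0r.
Qed.

Lemma comp_lower_inf_eq0 a b p (X : obj)
    (h : mor [:: (Some a, b)] X) (f : mor X [:: (None, p)]) :
  (forall A, A \in X -> A.1 != None /\ A.2 < b) -> is_mor h -> is_mor f ->
  forall n, Defs.comp h f ord0 ord0 n = 0.
Proof.
move=> Xb gh gf n; apply: big1 => j _.
move: (Xb _ (mem_nth arc0 (ltn_ord j))) (h ord0 j) (gh ord0 j) (f j ord0) (gf j ord0).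
case: (nth arc0 X j) => [[c|] d] [] //= _ db H gH F gF.
exact: ghom_lower_comp_inf db gH gF n.
Qed.

(* For A = (a, b) and B = (-oo, p): in degree n, y^(b-1-n) goes to y^(p-n)
   and x y^(b-n) to 0. *)
Definition killx_mx (A B : Defs.arc) n : 'M[CC]_(adim A n, adim B n) :=
  \matrix_(i, j) (~~ (mon A n i).1)%:R.

Lemma row_killx A B n i : row i (killx_mx A B n) = const_mx (~~ (mon A n i).1)%:R.
Proof. by apply/rowP => j; rewrite !mxE. Qed.

Lemma const_mx_inf p n c (l : 'I_(adim (None, p) n)) :
  const_mx c = c *: delta_mx 0 l :> 'rV[CC]_(adim (None, p) n).
Proof. by apply/rowP => j; rewrite !mxE (adim_inf_ord_eq j l) !eqxx mulr1. Qed.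

Lemma killx_ghom a b p : a <= p -> is_ghom (killx_mx (Some a, b) (None, p)).
Proof.
move=> ap n; split; apply/row_matrixP => i; rewrite !row_mul.
- rewrite xmat_inf mulmx0.
  case E: (mon (Some a, b) n i) => [[] m]; first by rewrite row_xmat_x ?E ?mul0mx.
  have /arc_basis_index[i1 ei1] : (true, m) \in arc_basis (Some a, b) (n + 1).
    by apply: arc_basis_xmul; rewrite -E mem_mon.
  have xi : xmul (mon (Some a, b) n i) = Some (mon (Some a, b) (n + 1) i1).
    by rewrite E ei1.
  by rewrite (row_xmat xi) -rowE row_killx ei1; apply/rowP => j; rewrite !mxE.
- have /arc_basis_index[i0 ei0] := arc_basis_ymul (mem_mon i).
  have yi : ymul (mon (Some a, b) (n + 1) i) = Some (mon (Some a, b) n i0).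
    by rewrite ei0.
  rewrite (row_ymat yi) -rowE !row_killx ei0 /=.
  case E: (mon (Some a, b) (n + 1) i) => [[] m] /=.
    by apply/rowP => j; rewrite !mxE big1 // => k _; rewrite !mxE mul0r.
  have n1a : n + 1 <= a by move: (mem_mon i); rewrite E mem_arc_basis_y; lia.
  have /arc_basis_index[l el] :
      (false, `|(p - (n + 1))%R|%N) \in arc_basis (None, p) (n + 1).
    by rewrite mem_arc_basis_inf; lia.
  have /arc_basis_index[l0 el0] : (false, `|(p - n)%R|%N) \in arc_basis (None, p) n.
    by rewrite mem_arc_basis_inf; lia.
  have yl : ymul (mon (None, p) (n + 1) l) = Some (mon (None, p) n l0).
    by rewrite el el0 /ymul /=; congr (Some (_, _)); lia.
  by rewrite (const_mx_inf _ l) (const_mx_inf _ l0) -scalemxAl -rowE (row_ymat yl).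
Qed.

Lemma killx_neq0 a b p : a < b -> a <= p -> killx_mx (Some a, b) (None, p) a != 0.
Proof.
move=> ab ap.
have /arc_basis_index[i ei] : (false, `|(b - 1 - a)%R|%N) \in arc_basis (Some a, b) a.
  by rewrite mem_arc_basis_y; lia.
have /arc_basis_index[j _] : (false, `|(p - a)%R|%N) \in arc_basis (None, p) a.
  by rewrite mem_arc_basis_inf; lia.
apply/eqP => /matrixP/(_ i j); rewrite !mxE ei /= mulr1n => e.
by have := @oner_neq0 CC; rewrite e eqxx.
Qed.

Lemma exists_ub_seq (X : eqType) (f : X -> int) (s : seq X) :
  exists B, forall x, x \in s -> f x <= B.
Proof.
elim: s => [|y s [B sB]]; first by exists 0.
exists (Num.max (f y) B) => x; rewrite inE le_max => /predU1P[->|/sB ->];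
  by rewrite ?lexx ?orbT.
Qed.

Lemma int_max_exists (P : int -> Prop) B :
  (exists z, P z) -> (forall z, P z -> z <= B) ->
  exists z, P z /\ forall w, P w -> w <= z.
Proof.
move=> [z0 Pz0] ub; apply: NNPP => nomax.
suff [z [Pz le_z]] : exists z, P z /\ z0 + `|(B - z0)%R|.+1%:Z <= z.
  by have := ub z Pz; lia.
elim: `|(B - z0)%R|.+1 => [|k [z [Pz le_z]]]; first by exists z0; rewrite addr0.
have [w [Pw lt_zw]] : exists w, P w /\ z < w.
  apply: NNPP => nw; apply: nomax; exists z; split=> // w Pw.
  by rewrite leNgt; apply/negP => lt_zw; apply: nw; exists w.
by exists w; split=> //; lia.
Qed.

Lemma int_min_exists (P : int -> Prop) B :
  (exists z, P z) -> (forall z, P z -> B <= z) ->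
  exists z, P z /\ forall w, P w -> z <= w.
Proof.
move=> [z0 Pz0] lb; have [|w Pw|z [Pz max_z]] := @int_max_exists (fun z => P (- z)) (- B).
- by exists (- z0); rewrite opprK.
- by have := lb _ Pw; lia.
- by exists (- z); split=> // w Pw; have := max_z (- w); rewrite opprK => /(_ Pw); lia.
Qed.

Lemma triangulation_edge T n : triangulation T -> T n (n + 1).
Proof.
case=> _ [_ Tmax]; apply: NNPP => nT.
have [c [d [_]]] := Tmax n (n + 1) (ltrDl n 1 : _) nT; rewrite /crosses; lia.
Qed.

Lemma locally_finite_len_ub T n : locally_finite T ->
  exists B, forall a b, T a b -> (a = n \/ b = n) -> b - a <= B.
Proof.
move=> /(_ n) [l Hl]; have [B lB] := exists_ub_seq (fun x : int * int => x.2 - x.1) l.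
by exists B => a b Tab e; apply: lB (Hl _ _ Tab e).
Qed.

Lemma covering_len_ub T p k : locally_finite T ->
  exists B, forall a b, T a b -> p < a -> a <= p + k%:Z -> b - a <= B.
Proof.
move=> lT; elim: k => [|k [B HB]]; first by exists 0 => a b _; lia.
have [B' HB'] := locally_finite_len_ub (p + k.+1%:Z) lT.
exists (Num.max B B') => a b Tab pa ak; rewrite le_max.
case: (lerP a (p + k%:Z)) => ak'; first by rewrite HB.
by rewrite HB' ?orbT //; left; lia.
Qed.

(* Take a covering arc (a, b) of maximal length and the leftmost u with T u a
   (or u = a - 1).  The longer arc (u, b) is not in T, and an arc of T crossing
   it would cross (a, b) or (u, a), or contradict one of the two choices. *)
Lemma triangulation_long_arc T p D : triangulation T -> locally_finite T -> p <= D ->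
  exists a b, T a b /\ a <= p /\ D < b.
Proof.
move=> [Tlt [Tnc Tmax]] lT pD; apply: NNPP => none.
have far a b : T a b -> a <= D -> D < b -> p < a.
  move=> Tab _ Db; rewrite ltNge; apply/negP => ap; apply: none; by exists a, b; do !split.
pose len l := exists a b, T a b /\ a <= D /\ D < b /\ l = b - a.
have [B HB] := covering_len_ub p `|(D - p)%R| lT.
have [_ [[a [b [Tab [aD [Db ->]]]]] max_len]] : exists L, len L /\ forall l, len l -> l <= L.
  apply: (@int_max_exists _ B).
    by exists 1, D, (D + 1); split; [exact: triangulation_edge | lia].
  move=> _ [a [b [Tab [aD [Db ->]]]]]; have := far _ _ Tab aD Db.
  by move=> pa; apply: HB => //; lia.
have no_longer c d : T c d -> c <= D -> D < d -> d - c <= b - a.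
  by move=> Tcd cD Dd; apply: max_len; exists c, d.
pose ends_at_a c := c = a - 1 \/ T c a.
have [B' HB'] := locally_finite_len_ub a lT.
have [u [u_a min_u]] : exists u, ends_at_a u /\ forall c, ends_at_a c -> u <= c.
  apply: (@int_min_exists _ (a - 1 - `|B'|%:Z)); first by exists (a - 1); left.
  by move=> c [->|Tca]; [lia | have := HB' _ _ Tca (or_intror erefl); lia].
have ua : u < a by case: u_a => [->|/Tlt]; lia.
have nTub : ~ T u b by move=> Tub; have := no_longer _ _ Tub; lia.
have [c [d [Tcd [[uc [cb bd]] | [cu [ud db]]]]]] := Tmax u b ltac:(lia) nTub.
- case: (lerP c a) => ca; first by have := no_longer _ _ Tcd; lia.
  by apply: (Tnc _ _ _ _ Tab Tcd); left; lia.
- case: (ltrgtP d a) => [da|ad|da].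
  + case: u_a => [eu|Tua]; first lia.
    by apply: (Tnc _ _ _ _ Tua Tcd); right; lia.
  + by apply: (Tnc _ _ _ _ Tab Tcd); right; lia.
  + by rewrite da in Tcd; have := min_u c (or_intror Tcd); lia.
Qed.

Lemma triangulation_covering_arc T p D : triangulation T -> locally_finite T ->
  exists a b, T a b /\ a <= p /\ D < b.
Proof.
move=> tT lT; case: (lerP p D) => [|Dp]; first exact: triangulation_long_arc.
have [a [b [Tab [ap pb]]]] := triangulation_long_arc tT lT (lexx p).
by exists a, b; do !split=> //; lia.
Qed.

Theorem propositionA6 (T : int -> int -> Prop) :
  triangulation T -> locally_finite T ->
  ~ precovering (arcs_of T) /\ ~ functorially_finite (arcs_of T).
Proof.
move=> tT lT; suff not_pc : ~ precovering (arcs_of T) by split=> // -[].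
pose M : obj := [:: (None, 0)].
move=> /(_ M) [A|X [f [TX [gf fact]]]]; first by rewrite inE => /eqP ->.
have [D XD] := exists_ub_seq (fun A : Defs.arc => A.2) X.
have [a [b [Tab [a0 Db]]]] := triangulation_covering_arc 0 D tT lT.
pose Y : obj := [:: (Some a, b)].
pose g : mor Y M := fun i j => killx_mx (nth arc0 Y i) (nth arc0 M j).
have gg : is_mor g by move=> [[|i] ?] [[|j] ?] //; apply: killx_ghom.
have TY : in_subcat (arcs_of T) Y by move=> A; rewrite inE => /eqP ->.
have [h [gh hfg]] := fact Y g TY gg.
have Xb A : A \in X -> A.1 != None /\ A.2 < b.
  by move=> AX; have := XD A AX; have := TX A AX; case: A {AX} => [[c|] d] //= _; lia.
have := killx_neq0 (tT.1 _ _ Tab) a0.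
by rewrite -[killx_mx _ _ a]/(g ord0 ord0 a) -hfg (comp_lower_inf_eq0 Xb gh gf) eqxx.
Qed.
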